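(* Let $f,g:\mathbb N\to\mathbb C$ and $\beta\in\mathbb C$ satisfy: for every even $n\in\mathbb N$, $g(n+2)f(n+2)-g(n)f(n)\mathbf 1_{\{n\ge2\}}=\beta$. Assume $|f(2n)|>0$ for all $n\ge1$ and that the limit $M_f=\lim_{n\to\infty}n/|f(2n)|\in[0,\infty]$ exists. Then for all $l,m,n\in\mathbb N$ and all $\alpha\in\mathbb C$ with $|\alpha|<M_f$, $\Omega\in\mathrm D\big((g_{N+2}L^2)^l N^m (f_NL^{*2})^n e^{\alpha f_NL^{*2}}\big)$, and $\xi_{\alpha,f}=e^{\alpha f_NL^{*2}}\Omega$ satisfies $g_{N+2}L^2\,\xi_{\alpha,f}=\alpha\beta\,\xi_{\alpha,f}$.
   Context: $\ell^2=\ell^2(\mathbb N)$, $\mathbb N=\{0,1,\dots\}$, basis $(\xi_n)$, $\Omega=\xi_0$; $N\xi_n=n\xi_n$ (maximal domain). $f_NL^{*2}$ is the operator $\xi_n\mapsto f(n+2)\xi_{n+2}$ (closure from finite combinations, maximal domain); $g_{N+2}L^2$ is the operator $\xi_n\mapsto g(n)\xi_{n-2}$ for $n\ge2$ and $\xi_0,\xi_1\mapsto0$ (maximal domain). Exponentials are defined by power series: $e^{A}\varphi=\sum_k A^k\varphi/k!$ on the set of $\varphi\in\bigcap_k\mathrm D(A^k)$ for which the series converges; compositions have their natural domains. *)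

From Stdlib Require Import Reals Arith.
From Coquelicot Require Import Coquelicot.
Open Scope R_scope.

(* Vectors of l^2(N) are represented by their coefficient sequences
   phi : nat -> C w.r.t. the basis (xi_n). *)
Definition vec := nat -> C.

Definition l2 (phi : vec) : Prop := ex_series (fun n => (Cmod (phi n))^2).

Definition Omega : vec := fun k => if Nat.eqb k 0 then RtoC 1 else RtoC 0.

Definition l2_lim (s : nat -> vec) (psi : vec) : Prop :=
  l2 psi /\ (forall K, l2 (s K)) /\
  is_lim_seq (fun K => Series (fun n => (Cmod (s K n - psi n)%C)^2)) 0.

(* (Possibly unbounded) operators on l^2(N), given by their graphs:
   op phi psi  means  phi is in the domain and op phi = psi. *)
Definition op := vec -> vec -> Prop.

Definition Iop : op := fun phi psi => l2 phi /\ psi = phi.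

Definition opcomp (X Y : op) : op := fun phi chi => exists psi, Y phi psi /\ X psi chi.

Fixpoint opow (X : op) (k : nat) : op :=
  match k with O => Iop | S k' => opcomp X (opow X k') end.

Definition in_dom (X : op) (phi : vec) : Prop := exists psi, X phi psi.

Definition Nop : op := fun phi psi =>
  l2 phi /\ l2 psi /\ forall k, psi k = (RtoC (INR k) * phi k)%C.

(* f_N L^{*2} : xi_n |-> f(n+2) xi_{n+2}, maximal domain
   (which is the closure of its restriction to finite combinations). *)
Definition Aop (f : nat -> C) : op := fun phi psi =>
  l2 phi /\ l2 psi /\
  forall k, psi k = (if (k <? 2)%nat then RtoC 0 else (f k * phi (k - 2)%nat)%C).

(* g_{N+2} L^2 : xi_n |-> g(n) xi_{n-2} (n >= 2), xi_0, xi_1 |-> 0, maximal domain *)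
Definition Bop (g : nat -> C) : op := fun phi psi =>
  l2 phi /\ l2 psi /\ forall k, psi k = (g (k + 2)%nat * phi (k + 2)%nat)%C.

Definition scal_vec (c : C) (phi : vec) : vec := fun k => (c * phi k)%C.

Fixpoint cpow (z : C) (k : nat) : C :=
  match k with O => RtoC 1 | S k' => (z * cpow z k')%C end.

Fixpoint psum (c : nat -> C) (u : nat -> vec) (K : nat) : vec :=
  match K with
  | O => fun _ => RtoC 0
  | S K' => fun n => (psum c u K' n + c K' * u K' n)%C
  end.

(* e^{alpha A} phi = sum_k (alpha A)^k phi / k!, defined on those phi in
   the intersection of all D(A^k) for which the series converges in l^2.
   u k is A^k phi. *)
Definition expop (alpha : C) (A : op) : op := fun phi psi =>
  exists u : nat -> vec,
    u O = phi /\ (forall k, A (u k) (u (S k))) /\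
    l2_lim (psum (fun k => (cpow alpha k / RtoC (INR (fact k)))%C) u) psi.

From Stdlib Require Import Reals Arith Lia Lra FunctionalExtensionality.
From Coquelicot Require Import Coquelicot.
Open Scope R_scope.

(* Since [A := f_N L^{*2}] raises by two, [A^k Omega = f(2) ... f(2k) xi_{2k}], so the
   exponential series [e^{alpha A} Omega] has coefficients [alpha^k/k! f(2)...f(2k)] on
   [xi_{2k}]; its partial sums are truncations of this vector.  Call a vector dominated if it
   is even and its [xi_{2k}]-coefficients are [O(r^k |f(2)...f(2k)|/k!)] for every
   [r > |alpha|].  Dominated vectors are stable under [A] and [N] (a polynomial factor is
   absorbed by enlarging [r]) and under [B := g_{N+2} L^2], because the hypothesis telescopes
   to [g(2k+2) f(2k+2) = (k+1) beta].  The limit [n/|f(2n)| -> M_f > |alpha|] makes these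
   weights geometrically decaying, so dominated vectors lie in l^2; hence all compositions
   are defined, and the same identity gives [B xi = alpha beta xi] coefficientwise. *)

Lemma pow_decr_le_1 (s : R) (m n : nat) : 0 <= s <= 1 -> (m <= n)%nat -> s ^ n <= s ^ m.
Proof.
  intros Hs Hmn. replace n with (m + (n - m))%nat by lia. rewrite pow_add.
  assert (s ^ (n - m) <= 1) by (rewrite <- (pow1 (n - m)); apply pow_incr; lra).
  assert (0 <= s ^ m) by (apply pow_le; lra). nra.
Qed.

Lemma Bernoulli_le (h : R) (k : nat) : 0 <= h -> 1 + INR k * h <= (1 + h) ^ k.
Proof.
  intros Hh. induction k as [|k IH]; [simpl; lra|]. rewrite S_INR. simpl.
  assert (0 <= INR k * (h * h)) by (apply Rmult_le_pos; [apply pos_INR | nra]). nra.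
Qed.

Lemma INR_mul_pow_le (a b : R) :
  0 < a < b -> exists K, 0 <= K /\ forall k, INR k * a ^ k <= K * b ^ k.
Proof.
  intros [Ha Hab]. set (h := (b - a) / a).
  assert (Hh : 0 < h) by (apply Rdiv_lt_0_compat; lra).
  exists (/ h). split; [apply Rlt_le, Rinv_0_lt_compat; exact Hh|]. intros k.
  assert (Hb : b ^ k = a ^ k * (1 + h) ^ k)
    by (rewrite <- Rpow_mult_distr; f_equal; unfold h; field; lra).
  pose proof (Bernoulli_le h k (Rlt_le _ _ Hh)) as HB.
  assert (0 <= a ^ k) by (apply pow_le; lra).
  apply Rmult_le_reg_l with h; [exact Hh|].
  replace (h * (/ h * b ^ k)) with (b ^ k) by (field; lra).
  rewrite Hb. pose proof (pos_INR k). nra.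
Qed.

Lemma geom_bound_of_eventual_ratio (N : nat) : forall (a : nat -> R) (q : R),
  0 < q -> (forall k, 0 <= a k) -> (forall k, (N <= k)%nat -> a (S k) <= q * a k) ->
  exists K, 0 <= K /\ forall k, a k <= K * q ^ k.
Proof.
  induction N as [|N IH]; intros a q Hq Ha Hratio.
  - exists (a 0%nat). split; [apply Ha|]. induction k as [|k IHk]; simpl; [lra|].
    specialize (Hratio k (Nat.le_0_l k)). nra.
  - destruct (IH (fun k => a (S k)) q Hq (fun k => Ha (S k))) as [K [HK Hbound]].
    { intros k Hk. apply Hratio. lia. }
    exists (Rmax (a 0%nat) (K / q)).
    split; [apply Rle_trans with (a 0%nat); [apply Ha | apply Rmax_l]|].
    intros [|k]; simpl.
    + rewrite Rmult_1_r. apply Rmax_l.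
    + apply Rle_trans with (K * q ^ k); [apply Hbound|].
      assert (0 <= q ^ k) by (apply pow_le; lra).
      replace (K * q ^ k) with (K / q * (q * q ^ k)) by (field; lra).
      apply Rmult_le_compat_r; [apply Rmult_le_pos; lra | apply Rmax_r].
Qed.

Lemma is_lim_seq_eventually_gt (u : nat -> R) (l : Rbar) (x : R) :
  is_lim_seq u l -> Rbar_lt x l -> exists t N, x < t /\ forall n, (N <= n)%nat -> t < u n.
Proof.
  intros Hu Hx. apply is_lim_seq_spec in Hu. destruct l as [l| |]; simpl in *.
  - assert (He : 0 < (l - x) / 2) by lra.
    destruct (Hu (mkposreal _ He)) as [N HN]. exists ((x + l) / 2), N. split; [lra|].
    intros n Hn. specialize (HN n Hn). simpl in HN. apply Rabs_def2 in HN. lra.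
  - destruct (Hu (x + 1)) as [N HN]. exists (x + 1), N. split; [lra | exact HN].
  - contradiction.
Qed.

Lemma Series_nonneg (a : nat -> R) : (forall n, 0 <= a n) -> ex_series a -> 0 <= Series a.
Proof.
  intros Ha Hs. replace 0 with (Series (fun n => 0 * a n)).
  - apply Series_le; [|exact Hs]. intros n. rewrite Rmult_0_l. split; [lra | apply Ha].
  - rewrite Series_scal_l. ring.
Qed.

Lemma term_le_Series (a : nat -> R) (n : nat) :
  (forall n, 0 <= a n) -> ex_series a -> a n <= Series a.
Proof.
  intros Ha Hs. rewrite (Series_incr_n a (S n)) by (lia || exact Hs). simpl Init.Nat.pred.
  assert (a n <= sum_f_R0 a n).
  { destruct n as [|n]; simpl; [lra|]. pose proof (cond_pos_sum a n Ha). lra. }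
  assert (0 <= Series (fun k => a (S n + k)%nat)).
  { apply Series_nonneg; [intros; apply Ha | exact (proj1 (ex_series_incr_n a (S n)) Hs)]. }
  lra.
Qed.

Lemma ex_series_sqr_Cmod_sub (a b : vec) :
  l2 a -> l2 b -> ex_series (fun n => (Cmod (a n - b n)%C) ^ 2).
Proof.
  intros Ha Hb.
  apply (@ex_series_le R_AbsRing R_CompleteNormedModule _
           (fun n => 2 * (Cmod (a n)) ^ 2 + 2 * (Cmod (b n)) ^ 2)).
  - intros n. change (norm ((Cmod (a n - b n)%C) ^ 2)) with (Rabs ((Cmod (a n - b n)%C) ^ 2)).
    rewrite Rabs_pos_eq by apply pow2_ge_0.
    assert (Cmod (a n - b n)%C <= Cmod (a n) + Cmod (b n)).
    { unfold Cminus. rewrite <- (Cmod_opp (b n)). apply Cmod_triangle. }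
    pose proof (Cmod_ge_0 (a n - b n)%C).
    pose proof (pow2_ge_0 (Cmod (a n) - Cmod (b n))). nra.
  - apply (ex_series_plus (fun n => 2 * (Cmod (a n)) ^ 2) (fun n => 2 * (Cmod (b n)) ^ 2));
      [apply (ex_series_scal_l 2 (fun n => (Cmod (a n)) ^ 2))
      |apply (ex_series_scal_l 2 (fun n => (Cmod (b n)) ^ 2))]; assumption.
Qed.

Lemma l2_lim_unique_coord (s : nat -> vec) (psi phi : vec) :
  l2_lim s psi -> (forall n, exists K0, forall K, (K0 <= K)%nat -> s K n = phi n) -> psi = phi.
Proof.
  intros [Hpsi [Hs Hlim]] Hcoord. apply functional_extensionality. intros n.
  set (x := (Cmod (phi n - psi n)%C) ^ 2).
  assert (Hx : Rbar_le x 0).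
  { apply (is_lim_seq_le_loc (fun _ => x)
      (fun K => Series (fun m => (Cmod (s K m - psi m)%C) ^ 2)) x 0);
      [|apply is_lim_seq_const | exact Hlim].
    destruct (Hcoord n) as [K0 HK0]. exists K0. intros K HK. unfold x. rewrite <- (HK0 K HK).
    apply (term_le_Series (fun m => (Cmod (s K m - psi m)%C) ^ 2));
      [intros; apply pow2_ge_0 | apply ex_series_sqr_Cmod_sub; auto]. }
  simpl in Hx. pose proof (Cmod_ge_0 (phi n - psi n)%C).
  assert (Cmod (phi n - psi n)%C = 0) by (unfold x in Hx; nra).
  symmetry. apply Ceq_minus, Cmod_eq_0. assumption.
Qed.

Definition geom_decay (v : vec) : Prop :=
  exists D s, 0 <= D /\ 0 <= s < 1 /\ forall n, Cmod (v n) <= D * s ^ n.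

Lemma sqr_Cmod_le_geom (z : C) (D s : R) (n : nat) :
  0 <= D -> 0 <= s -> Cmod z <= D * s ^ n -> Cmod z ^ 2 <= D ^ 2 * (s ^ n * s ^ n).
Proof.
  intros HD Hs Hz. pose proof (Cmod_ge_0 z).
  replace (D ^ 2 * (s ^ n * s ^ n)) with ((D * s ^ n) ^ 2) by ring. apply pow_incr. lra.
Qed.

Lemma geom_decay_l2 (v : vec) : geom_decay v -> l2 v.
Proof.
  intros [D [s [HD [Hs Hv]]]]. unfold l2.
  apply (@ex_series_le R_AbsRing R_CompleteNormedModule _ (fun n => D ^ 2 * (s * s) ^ n)).
  - intros n. change (norm ((Cmod (v n)) ^ 2)) with (Rabs ((Cmod (v n)) ^ 2)).
    rewrite Rabs_pos_eq by apply pow2_ge_0. rewrite Rpow_mult_distr.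
    apply sqr_Cmod_le_geom; [exact HD | apply Hs | apply Hv].
  - apply (ex_series_scal_l (D ^ 2) (fun n => (s * s) ^ n)), ex_series_geom.
    rewrite Rabs_pos_eq; nra.
Qed.

Definition trunc (N : nat) (v : vec) : vec := fun n => if (n <? N)%nat then v n else RtoC 0.

Lemma l2_lim_trunc (v : vec) (N : nat -> nat) :
  geom_decay v -> (forall K, (K <= N K)%nat) -> l2_lim (fun K => trunc (N K) v) v.
Proof.
  intros Hv HN. pose proof Hv as [D [s [HD [Hs Hvn]]]].
  split; [|split]; [apply geom_decay_l2, Hv| |].
  - intros K. apply geom_decay_l2. exists D, s. split; [exact HD|]. split; [exact Hs|].
    intros n. unfold trunc. destruct (n <? N K)%nat; [apply Hvn|].
    rewrite Cmod_0. apply Rmult_le_pos; [exact HD | apply pow_le; apply Hs].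
  - set (e := fun K n => (Cmod (trunc (N K) v n - v n)%C) ^ 2).
    assert (He : forall K n, 0 <= e K n <= D ^ 2 * s ^ K * s ^ n).
    { intros K n. unfold e, trunc. split; [apply pow2_ge_0|].
      assert (0 <= D ^ 2 * s ^ K * s ^ n) by (repeat apply Rmult_le_pos; try apply pow_le; lra).
      destruct (Nat.ltb_spec n (N K)) as [Hn|Hn].
      - unfold Cminus. rewrite Cplus_opp_r, Cmod_0. simpl. lra.
      - unfold Cminus. rewrite Cplus_0_l, Cmod_opp.
        apply Rle_trans with (D ^ 2 * (s ^ n * s ^ n)); [apply sqr_Cmod_le_geom; auto; apply Hs|].
        rewrite Rmult_assoc. apply Rmult_le_compat_l; [apply pow_le; exact HD|].
        apply Rmult_le_compat_r; [apply pow_le; apply Hs|].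
        apply pow_decr_le_1; [lra | specialize (HN K); lia]. }
    assert (Hgeo : forall K, ex_series (fun n => D ^ 2 * s ^ K * s ^ n)).
    { intros K. apply (ex_series_scal_l (D ^ 2 * s ^ K) (fun n => s ^ n)), ex_series_geom.
      rewrite Rabs_pos_eq; lra. }
    apply is_lim_seq_le_le with (u := fun _ => 0) (w := fun K => D ^ 2 / (1 - s) * s ^ K).
    + intros K. split.
      * apply Series_nonneg; [intros; apply He|].
        refine (@ex_series_le R_AbsRing R_CompleteNormedModule (e K) _ _ (Hgeo K)).
        intros n. change (norm (e K n)) with (Rabs (e K n)). rewrite Rabs_pos_eq; apply He.
      * apply Rle_trans with (Series (fun n => D ^ 2 * s ^ K * s ^ n));
          [apply Series_le; [apply He | apply Hgeo]|].
        rewrite Series_scal_l, Series_geom by (rewrite Rabs_pos_eq; lra). right. field. lra.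
    + apply is_lim_seq_const.
    + replace (Finite 0) with (Rbar_mult (D ^ 2 / (1 - s)) 0) by (simpl; f_equal; ring).
      apply is_lim_seq_scal_l, is_lim_seq_geom. rewrite Rabs_pos_eq; lra.
Qed.

Definition even_vec (d : nat -> C) : vec :=
  fun n => if Nat.even n then d (Nat.div2 n) else RtoC 0.

Lemma even_vec_even (d : nat -> C) (k : nat) : even_vec d (2 * k)%nat = d k.
Proof. unfold even_vec. rewrite Nat.even_mul. simpl. f_equal. apply Nat.div2_double. Qed.

Lemma even_vec_odd (d : nat -> C) (k : nat) : even_vec d (2 * k + 1)%nat = RtoC 0.
Proof. unfold even_vec. rewrite Nat.even_add, Nat.even_mul. reflexivity. Qed.

Definition Afun (f : nat -> C) (phi : vec) : vec :=
  fun k => if (k <? 2)%nat then RtoC 0 else (f k * phi (k - 2)%nat)%C.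
Definition Nfun (phi : vec) : vec := fun k => (RtoC (INR k) * phi k)%C.
Definition Bfun (g : nat -> C) (phi : vec) : vec := fun k => (g (k + 2)%nat * phi (k + 2)%nat)%C.

Section Weight.

Variable f : nat -> C.

Fixpoint fprod (k : nat) : C :=
  match k with O => RtoC 1 | S j => (fprod j * f (2 * j + 2)%nat)%C end.

Definition weight (r : R) (k : nat) : R := r ^ k * (Cmod (fprod k) / INR (fact k)).

Lemma weight_nonneg (r : R) (k : nat) : 0 <= r -> 0 <= weight r k.
Proof.
  intros Hr. apply Rmult_le_pos; [apply pow_le; exact Hr|].
  apply Rdiv_le_0_compat; [apply Cmod_ge_0 | apply INR_fact_lt_0].
Qed.

Lemma weight_0 (r : R) : weight r 0 = 1.
Proof. unfold weight. simpl. rewrite Cmod_1. lra. Qed.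

Lemma weight_succ (r : R) (k : nat) :
  weight r (S k) = r * Cmod (f (2 * k + 2)%nat) / INR (S k) * weight r k.
Proof.
  unfold weight. change (fprod (S k)) with (fprod k * f (2 * k + 2)%nat)%C.
  rewrite Cmod_mult, fact_simpl, mult_INR. change (r ^ S k) with (r * r ^ k).
  field. split; [apply INR_fact_neq_0 | apply not_0_INR; lia].
Qed.

Lemma INR_mul_weight_le (r' r : R) :
  0 < r' < r -> exists K, 0 <= K /\ forall k, INR k * weight r' k <= K * weight r k.
Proof.
  intros Hr. destruct (INR_mul_pow_le r' r Hr) as [K [HK Hpow]]. exists K. split; [exact HK|].
  intros k. unfold weight. rewrite <- !Rmult_assoc. apply Rmult_le_compat_r; [|apply Hpow].
  apply Rdiv_le_0_compat; [apply Cmod_ge_0 | apply INR_fact_lt_0].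
Qed.

Definition dominated (a : C) (v : vec) : Prop :=
  (forall k, v (2 * k + 1)%nat = RtoC 0) /\
  forall r, Cmod a < r -> exists c, forall k, Cmod (v (2 * k)%nat) <= c * weight r k.

Lemma weight_bound_nonneg (v : vec) (r c : R) :
  (forall k, Cmod (v (2 * k)%nat) <= c * weight r k) -> 0 <= c.
Proof.
  intros Hv. specialize (Hv 0%nat). rewrite weight_0, Rmult_1_r in Hv.
  pose proof (Cmod_ge_0 (v (2 * 0)%nat)). lra.
Qed.

Variable a : C.

Lemma dominated_Omega : dominated a Omega.
Proof.
  split.
  - intros k. unfold Omega. replace (2 * k + 1)%nat with (S (2 * k)) by lia. reflexivity.
  - intros r Hr. pose proof (Cmod_ge_0 a). exists 1. intros [|k].
    + rewrite weight_0. unfold Omega. simpl. rewrite Cmod_1. lra.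
    + unfold Omega. replace (2 * S k)%nat with (S (S (2 * k))) by lia. simpl Nat.eqb; cbv iota.
      rewrite Cmod_0, Rmult_1_l. apply weight_nonneg. lra.
Qed.

Lemma dominated_Afun (v : vec) : dominated a v -> dominated a (Afun f v).
Proof.
  intros [Hodd Hbound]. split.
  - intros [|k]; unfold Afun; [reflexivity|].
    replace (2 * S k + 1 <? 2)%nat with false by (symmetry; apply Nat.ltb_ge; lia).
    replace (2 * S k + 1 - 2)%nat with (2 * k + 1)%nat by lia. rewrite Hodd. apply Cmult_0_r.
  - intros r Hr. pose proof (Cmod_ge_0 a). set (r' := (Cmod a + r) / 2).
    assert (Hr' : 0 < r' < r) by (unfold r'; lra).
    destruct (Hbound r' ltac:(unfold r'; lra)) as [c Hc].
    pose proof (weight_bound_nonneg _ _ _ Hc) as Hc0.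
    destruct (INR_mul_weight_le r' r Hr') as [K [HK HINR]].
    exists (c * K / r'). intros [|k]; unfold Afun.
    + simpl (2 * 0)%nat. replace (0 <? 2)%nat with true by reflexivity. rewrite Cmod_0.
      apply Rmult_le_pos; [|apply weight_nonneg; lra].
      apply Rdiv_le_0_compat; [apply Rmult_le_pos|]; lra.
    + replace (2 * S k <? 2)%nat with false by (symmetry; apply Nat.ltb_ge; lia).
      replace (2 * S k - 2)%nat with (2 * k)%nat by lia.
      replace (2 * S k)%nat with (2 * k + 2)%nat by lia. rewrite Cmod_mult.
      (* one raising step costs a factor [(k+1)/r'], absorbed by passing from [r'] to [r] *)
      assert (Hstep : Cmod (f (2 * k + 2)%nat) * weight r' k
                     = / r' * (INR (S k) * weight r' (S k))).
      { rewrite weight_succ. field. split; [apply not_0_INR; lia | lra]. }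
      apply Rle_trans with (c * (Cmod (f (2 * k + 2)%nat) * weight r' k)).
      { replace (c * (Cmod (f (2 * k + 2)%nat) * weight r' k))
          with (Cmod (f (2 * k + 2)%nat) * (c * weight r' k)) by ring.
        apply Rmult_le_compat_l; [apply Cmod_ge_0 | apply Hc]. }
      rewrite Hstep.
      replace (c * (/ r' * (INR (S k) * weight r' (S k))))
        with (c / r' * (INR (S k) * weight r' (S k))) by (field; lra).
      replace (c * K / r' * weight r (S k)) with (c / r' * (K * weight r (S k))) by (field; lra).
      apply Rmult_le_compat_l; [apply Rdiv_le_0_compat; lra | apply HINR].
Qed.

Lemma dominated_Nfun (v : vec) : dominated a v -> dominated a (Nfun v).
Proof.
  intros [Hodd Hbound]. split.
  - intros k. unfold Nfun. rewrite Hodd. apply Cmult_0_r.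
  - intros r Hr. pose proof (Cmod_ge_0 a). set (r' := (Cmod a + r) / 2).
    destruct (Hbound r' ltac:(unfold r'; lra)) as [c Hc].
    pose proof (weight_bound_nonneg _ _ _ Hc) as Hc0.
    destruct (INR_mul_weight_le r' r ltac:(unfold r'; lra)) as [K [HK HINR]].
    exists (2 * c * K). intros k. unfold Nfun.
    rewrite Cmod_mult, Cmod_R, Rabs_pos_eq by apply pos_INR.
    replace (INR (2 * k)) with (2 * INR k) by (rewrite mult_INR; simpl; ring).
    pose proof (pos_INR k).
    apply Rle_trans with (2 * c * (INR k * weight r' k)).
    { replace (2 * c * (INR k * weight r' k))
        with (2 * INR k * (c * weight r' k)) by ring.
      apply Rmult_le_compat_l; [lra | apply Hc]. }
    rewrite (Rmult_assoc (2 * c)). apply Rmult_le_compat_l; [lra | apply HINR].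
Qed.

End Weight.

Definition exp_coef (a : C) (k : nat) : C := (cpow a k / RtoC (INR (fact k)))%C.

Definition coherent (f : nat -> C) (a : C) : vec :=
  even_vec (fun k => (exp_coef a k * fprod f k)%C).

Lemma Cmod_cpow (a : C) (k : nat) : Cmod (cpow a k) = Cmod a ^ k.
Proof. induction k as [|k IH]; simpl; [apply Cmod_1 | rewrite Cmod_mult, IH; reflexivity]. Qed.

Lemma dominated_coherent (f : nat -> C) (a : C) : dominated f a (coherent f a).
Proof.
  split; [intros k; apply even_vec_odd|].
  intros r Hr. exists 1. intros k. unfold coherent. rewrite even_vec_even, Rmult_1_l.
  unfold exp_coef, Cdiv, weight.
  rewrite !Cmod_mult, Cmod_inv, Cmod_R, Rabs_pos_eq, Cmod_cpow
    by (apply pos_INR || (intros E; apply RtoC_inj in E; revert E; apply INR_fact_neq_0)).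
  replace (Cmod a ^ k * / INR (fact k) * Cmod (fprod f k))
    with (Cmod a ^ k * (Cmod (fprod f k) / INR (fact k))) by (unfold Rdiv; ring).
  apply Rmult_le_compat_r; [apply Rdiv_le_0_compat; [apply Cmod_ge_0 | apply INR_fact_lt_0]|].
  apply pow_incr. pose proof (Cmod_ge_0 a). lra.
Qed.

Lemma iter_Afun_Omega (f : nat -> C) (k n : nat) :
  Nat.iter k (Afun f) Omega n = if (n =? 2 * k)%nat then fprod f k else RtoC 0.
Proof.
  revert n. induction k as [|k IH]; intros n; [reflexivity|].
  change (Nat.iter (S k) (Afun f) Omega) with (Afun f (Nat.iter k (Afun f) Omega)).
  unfold Afun. destruct (Nat.ltb_spec n 2).
  - destruct (Nat.eqb_spec n (2 * S k)); [lia | reflexivity].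
  - rewrite IH. destruct (Nat.eqb_spec (n - 2) (2 * k)), (Nat.eqb_spec n (2 * S k)); try lia.
    + subst n. replace (2 * S k)%nat with (2 * k + 2)%nat by lia. apply Cmult_comm.
    + apply Cmult_0_r.
Qed.

Lemma psum_iter_Afun_Omega (f : nat -> C) (a : C) (K : nat) :
  psum (exp_coef a) (fun k => Nat.iter k (Afun f) Omega) K = trunc (2 * K) (coherent f a).
Proof.
  apply functional_extensionality. intros n. revert n.
  induction K as [|K IH]; intros n; [reflexivity|].
  simpl psum. rewrite IH, iter_Afun_Omega. unfold trunc.
  destruct (Nat.eqb_spec n (2 * K)) as [->|Hn].
  - destruct (Nat.ltb_spec (2 * K) (2 * K)), (Nat.ltb_spec (2 * K) (2 * S K)); try lia.
    unfold coherent. rewrite even_vec_even. apply Cplus_0_l.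
  - rewrite Cmult_0_r, Cplus_0_r.
    destruct (Nat.ltb_spec n (2 * K)), (Nat.ltb_spec n (2 * S K)); try lia; try reflexivity.
    replace n with (2 * K + 1)%nat by lia. unfold coherent. rewrite even_vec_odd. reflexivity.
Qed.

Lemma expop_Omega_unique (f : nat -> C) (a : C) (xi : vec) :
  expop a (Aop f) Omega xi -> xi = coherent f a.
Proof.
  intros [u [Hu0 [HuS Hlim]]].
  assert (Hu : u = fun k => Nat.iter k (Afun f) Omega).
  { apply functional_extensionality. intros k. induction k as [|k IH]; [exact Hu0|].
    destruct (HuS k) as [_ [_ Hk]]. apply functional_extensionality. intros n.
    rewrite Hk, IH. reflexivity. }
  subst u. change (l2_lim (psum (exp_coef a) (fun k => Nat.iter k (Afun f) Omega)) xi) in Hlim.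
  apply (l2_lim_unique_coord _ _ _ Hlim). intros n. exists (S n). intros K HK.
  rewrite psum_iter_Afun_Omega. unfold trunc.
  destruct (Nat.ltb_spec n (2 * K)); [reflexivity | lia].
Qed.

Section Decay.

Variables (f : nat -> C) (a : C) (Mf : Rbar).
Hypothesis hf : forall n : nat, (1 <= n)%nat -> 0 < Cmod (f (2 * n)%nat).
Hypothesis hM : is_lim_seq (fun n : nat => INR n / Cmod (f (2 * n)%nat)) Mf.
Hypothesis ha : Rbar_lt (Cmod a) Mf.

(* Eventually [|f(2k+2)| < (k+1)/t] with [|a| < r < t], so the weights decay like [(r/t)^k]. *)
Lemma weight_geom_bound :
  exists r q K, Cmod a < r /\ 0 < q < 1 /\ 0 <= K /\ forall k, weight f r k <= K * q ^ k.
Proof.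
  destruct (is_lim_seq_eventually_gt _ _ _ hM ha) as [t [N [Ht HN]]].
  pose proof (Cmod_ge_0 a). set (r := (Cmod a + t) / 2). set (q := r / t).
  assert (Hr : Cmod a < r < t) by (unfold r; lra).
  assert (Hq : 0 < q < 1).
  { unfold q. split; [apply Rdiv_lt_0_compat; lra|].
    apply Rmult_lt_reg_r with t; [lra|]. field_simplify; lra. }
  destruct (geom_bound_of_eventual_ratio N (weight f r) q ltac:(lra)
              (fun k => weight_nonneg f r k ltac:(lra))) as [K [HK Hbound]].
  - intros k Hk. rewrite weight_succ. apply Rmult_le_compat_r; [apply weight_nonneg; lra|].
    specialize (HN (S k) ltac:(lia)). specialize (hf (S k) ltac:(lia)).
    replace (2 * S k)%nat with (2 * k + 2)%nat in HN, hf by lia.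
    assert (HS : 0 < INR (S k)) by (apply lt_0_INR; lia).
    apply Rmult_lt_compat_r with (r := Cmod (f (2 * k + 2)%nat)) in HN; [|exact hf].
    unfold Rdiv in HN. rewrite Rmult_assoc, Rinv_l, Rmult_1_r in HN by lra.
    unfold q. apply Rmult_le_reg_r with (INR (S k) * t); [apply Rmult_lt_0_compat; lra|].
    replace (r * Cmod (f (2 * k + 2)%nat) / INR (S k) * (INR (S k) * t))
      with (r * (t * Cmod (f (2 * k + 2)%nat))) by (field; lra).
    replace (r / t * (INR (S k) * t)) with (r * INR (S k)) by (field; lra).
    apply Rmult_le_compat_l; lra.
  - exists r, q, K. repeat split; auto; lra.
Qed.

Lemma dominated_geom_decay (v : vec) : dominated f a v -> geom_decay v.
Proof.
  intros [Hodd Hbound].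
  destruct weight_geom_bound as [r [q [K [Hr [Hq [HK Hweight]]]]]].
  destruct (Hbound r Hr) as [c Hc]. pose proof (weight_bound_nonneg f _ _ _ Hc) as Hc0.
  exists (c * K), (sqrt q). split; [apply Rmult_le_pos; lra|]. split.
  { split; [apply sqrt_pos|]. rewrite <- sqrt_1. apply sqrt_lt_1; lra. }
  assert (Hs : 0 <= sqrt q) by apply sqrt_pos.
  intros n. destruct (Nat.Even_or_Odd n) as [[k ->]|[k ->]].
  - rewrite pow_mult, pow2_sqrt by lra.
    apply Rle_trans with (c * weight f r k); [apply Hc|].
    rewrite Rmult_assoc. apply Rmult_le_compat_l; [exact Hc0 | apply Hweight].
  - rewrite Hodd, Cmod_0. apply Rmult_le_pos; [apply Rmult_le_pos; lra | apply pow_le; exact Hs].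
Qed.

Lemma dominated_l2 (v : vec) : dominated f a v -> l2 v.
Proof. intros Hv. apply geom_decay_l2, dominated_geom_decay, Hv. Qed.

Lemma expop_Omega_coherent : expop a (Aop f) Omega (coherent f a).
Proof.
  assert (Hdom : forall k, dominated f a (Nat.iter k (Afun f) Omega)).
  { induction k as [|k IH]; [apply dominated_Omega | apply (dominated_Afun f a _ IH)]. }
  exists (fun k => Nat.iter k (Afun f) Omega). split; [reflexivity|]. split.
  - intros k. split; [|split]; [apply dominated_l2, Hdom | apply dominated_l2, (Hdom (S k)) |].
    intros n. reflexivity.
  - change (l2_lim (psum (exp_coef a) (fun k => Nat.iter k (Afun f) Omega)) (coherent f a)).
    replace (psum (exp_coef a) (fun k => Nat.iter k (Afun f) Omega))
      with (fun K => trunc (2 * K) (coherent f a))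
      by (apply functional_extensionality; intros K; symmetry; apply psum_iter_Afun_Omega).
    apply l2_lim_trunc; [apply dominated_geom_decay, dominated_coherent | intros; lia].
Qed.

Lemma opow_iter_dominated (X : op) (F : vec -> vec) :
  (forall v, dominated f a v -> dominated f a (F v)) ->
  (forall v, l2 v -> l2 (F v) -> X v (F v)) ->
  forall k v, dominated f a v -> dominated f a (Nat.iter k F v) /\ opow X k v (Nat.iter k F v).
Proof.
  intros HF HX k. induction k as [|k IH]; intros v Hv.
  - split; [exact Hv|]. split; [apply dominated_l2, Hv | reflexivity].
  - destruct (IH v Hv) as [Hk Hop]. split; [apply HF, Hk|].
    exists (Nat.iter k F v). split; [exact Hop|].
    apply HX; apply dominated_l2; [exact Hk | apply HF, Hk].
Qed.

End Decay.

Section Annihilation.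

Variables (f g : nat -> C) (beta : C).
Hypothesis hgf : forall k, (g (2 * k + 2)%nat * f (2 * k + 2)%nat)%C = (RtoC (INR (S k)) * beta)%C.

Lemma dominated_Bfun (a : C) (v : vec) : dominated f a v -> dominated f a (Bfun g v).
Proof.
  intros [Hodd Hbound]. split.
  - intros k. unfold Bfun. replace (2 * k + 1 + 2)%nat with (2 * S k + 1)%nat by lia.
    rewrite Hodd. apply Cmult_0_r.
  - intros r Hr. destruct (Hbound r Hr) as [c Hc].
    pose proof (weight_bound_nonneg f _ _ _ Hc) as Hc0.
    exists (c * r * Cmod beta). intros k. unfold Bfun.
    replace (2 * k + 2)%nat with (2 * S k)%nat by lia. rewrite Cmod_mult.
    apply Rle_trans with (Cmod (g (2 * S k)%nat) * (c * weight f r (S k))).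
    { apply Rmult_le_compat_l; [apply Cmod_ge_0 | apply Hc]. }
    (* lowering then raising multiplies by [g(2k+2) f(2k+2) = (k+1) beta] *)
    assert (Hgf : Cmod (g (2 * S k)%nat) * Cmod (f (2 * k + 2)%nat) = INR (S k) * Cmod beta).
    { rewrite <- Cmod_mult. replace (2 * S k)%nat with (2 * k + 2)%nat by lia.
      rewrite hgf, Cmod_mult, Cmod_R, Rabs_pos_eq by apply pos_INR. reflexivity. }
    right. rewrite weight_succ.
    replace (Cmod (g (2 * S k)%nat)
             * (c * (r * Cmod (f (2 * k + 2)%nat) / INR (S k) * weight f r k)))
      with (c * r * (Cmod (g (2 * S k)%nat) * Cmod (f (2 * k + 2)%nat)) / INR (S k) * weight f r k)
      by (field; apply not_0_INR; lia).
    rewrite Hgf. field. apply not_0_INR. lia.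
Qed.

Lemma Bfun_coherent (a : C) : Bfun g (coherent f a) = scal_vec (a * beta)%C (coherent f a).
Proof.
  apply functional_extensionality. intros n. unfold Bfun, scal_vec, coherent.
  destruct (Nat.Even_or_Odd n) as [[k ->]|[k ->]].
  - replace (2 * k + 2)%nat with (2 * S k)%nat by lia. rewrite !even_vec_even.
    change (fprod f (S k)) with (fprod f k * f (2 * k + 2)%nat)%C.
    replace (2 * S k)%nat with (2 * k + 2)%nat by lia.
    transitivity ((g (2 * k + 2)%nat * f (2 * k + 2)%nat) * (exp_coef a (S k) * fprod f k))%C;
      [ring|].
    rewrite hgf. unfold exp_coef. change (cpow a (S k)) with (a * cpow a k)%C.
    rewrite fact_simpl, mult_INR, RtoC_mult.
    field. split; intros E; apply RtoC_inj in E; revert E;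
      [apply INR_fact_neq_0 | apply not_0_INR; lia].
  - replace (2 * k + 1 + 2)%nat with (2 * S k + 1)%nat by lia. rewrite !even_vec_odd.
    rewrite !Cmult_0_r. reflexivity.
Qed.

End Annihilation.

Lemma gf_telescope (f g : nat -> C) (beta : C)
  (hfg : forall n : nat, Nat.even n = true ->
     (g (n + 2)%nat * f (n + 2)%nat
      - (if (2 <=? n)%nat then (g n * f n)%C else RtoC 0))%C = beta) :
  forall k, (g (2 * k + 2)%nat * f (2 * k + 2)%nat)%C = (RtoC (INR (S k)) * beta)%C.
Proof.
  induction k as [|k IH].
  - specialize (hfg 0%nat eq_refl). simpl in *. rewrite <- hfg. ring.
  - assert (He : Nat.even (2 * k + 2) = true) by (rewrite Nat.even_add, Nat.even_mul; reflexivity).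
    specialize (hfg _ He).
    replace (2 <=? 2 * k + 2)%nat with true in hfg by (symmetry; apply Nat.leb_le; lia).
    replace (2 * k + 2 + 2)%nat with (2 * S k + 2)%nat in hfg by lia.
    rewrite IH in hfg.
    replace (g (2 * S k + 2)%nat * f (2 * S k + 2)%nat)%C with (beta + RtoC (INR (S k)) * beta)%C
      by (rewrite <- hfg at 1; ring).
    rewrite (S_INR (S k)), RtoC_plus. ring.
Qed.

Theorem mainTheorem6 (f g : nat -> C) (beta : C)
  (hfg : forall n : nat, Nat.even n = true ->
     (g (n + 2)%nat * f (n + 2)%nat
      - (if (2 <=? n)%nat then (g n * f n)%C else RtoC 0))%C = beta)
  (hf : forall n : nat, (1 <= n)%nat -> 0 < Cmod (f (2 * n)%nat))
  (Mf : Rbar)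
  (hM : is_lim_seq (fun n : nat => INR n / Cmod (f (2 * n)%nat)) Mf) :
  forall (l m n : nat) (alpha : C), Rbar_lt (Cmod alpha) Mf ->
    in_dom (opcomp (opow (Bop g) l)
             (opcomp (opow Nop m)
               (opcomp (opow (Aop f) n) (expop alpha (Aop f))))) Omega /\
    (forall xi : vec, expop alpha (Aop f) Omega xi ->
       Bop g xi (scal_vec (alpha * beta)%C xi)).
Proof.
  intros l m n alpha Ha.
  pose proof (gf_telescope f g beta hfg) as hgf.
  pose proof (opow_iter_dominated f alpha Mf hf hM Ha) as Hiter.
  split.
  - destruct (Hiter (Aop f) (Afun f) (dominated_Afun f alpha) ltac:(now repeat split)
                n _ (dominated_coherent f alpha)) as [HA OA].
    destruct (Hiter Nop Nfun (dominated_Nfun f alpha) ltac:(now repeat split) m _ HA) as [HN ON].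
    destruct (Hiter (Bop g) (Bfun g) (dominated_Bfun f g beta hgf alpha) ltac:(now repeat split)
                l _ HN) as [_ OB].
    exists (Nat.iter l (Bfun g) (Nat.iter m Nfun (Nat.iter n (Afun f) (coherent f alpha)))).
    exists (Nat.iter m Nfun (Nat.iter n (Afun f) (coherent f alpha))). split; [|exact OB].
    exists (Nat.iter n (Afun f) (coherent f alpha)). split; [|exact ON].
    exists (coherent f alpha). split; [|exact OA].
    apply (expop_Omega_coherent f alpha Mf hf hM Ha).
  - intros xi Hxi. rewrite (expop_Omega_unique f alpha xi Hxi), <- (Bfun_coherent f g beta hgf).
    pose proof (dominated_coherent f alpha) as Hdom.
    repeat split; apply (dominated_l2 f alpha Mf hf hM Ha);
      [exact Hdom | apply (dominated_Bfun f g beta hgf), Hdom].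
Qed.
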